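(* Let $\mathcal{E}$ be a finite-dimensional Euclidean space, $e\in\mathcal{E}$ nonzero, $H=\{x\in\mathcal{E}:\langle e,x\rangle=1\}$, let $C\subseteq H$ be a compact convex set and $\mathcal{K}=\operatorname{cone}C$. Then for every $x\in H\setminus(-\mathcal{K}^* )$, $$\operatorname{dist}(x,C)\le\|e\|\,r\,\operatorname{dist}(x,\mathcal{K}),$$ where $r=\max_{u\in C}\|u\|$.
   Context: $\operatorname{cone}C=\{\lambda x: x\in C,\lambda\ge0\}$; $\mathcal{K}^*=\{y:\langle y,x\rangle\ge0\ \forall x\in\mathcal{K}\}$ is the dual cone. *)

From HB Require Import structures.
From mathcomp Require Import all_boot all_order all_algebra.
From mathcomp Require Import all_classical all_reals all_analysis.
Set Implicit Arguments. Unset Strict Implicit. Unset Printing Implicit Defensive.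
Import Order.TTheory GRing.Theory Num.Theory.
Import numFieldNormedType.Exports.
Local Open Scope classical_set_scope.
Local Open Scope ring_scope.

(* The Euclidean space E is modelled as R^n = 'rV[R]_n with the standard
   inner product; compactness uses the library topology on matrices
   (all norms are equivalent in finite dimension). *)

Definition dotp (R : realType) (n : nat) (x y : 'rV[R]_n) : R :=
  \sum_(i < n) x ord0 i * y ord0 i.

Definition enorm (R : realType) (n : nat) (x : 'rV[R]_n) : R :=
  Num.sqrt (dotp x x).

Definition euclid_dist (R : realType) (n : nat) (x : 'rV[R]_n) (S : set 'rV[R]_n) : R :=
  inf [set enorm (x - y) | y in S].

Definition cone (R : realType) (n : nat) (C : set 'rV[R]_n) : set 'rV[R]_n :=
  [set y | exists2 l : R, 0 <= l & exists2 x, C x & y = l *: x].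

Definition dual_cone (R : realType) (n : nat) (K : set 'rV[R]_n) : set 'rV[R]_n :=
  [set y | forall x, K x -> 0 <= dotp y x].

Definition neg_set (R : realType) (n : nat) (S : set 'rV[R]_n) : set 'rV[R]_n :=
  [set x | S (- x)].

Definition convex_set_ (R : realType) (n : nat) (C : set 'rV[R]_n) : Prop :=
  forall x y (t : R), C x -> C y -> 0 <= t -> t <= 1 ->
    C (t *: x + (1 - t) *: y).

Definition hyperplane (R : realType) (n : nat) (e : 'rV[R]_n) : set 'rV[R]_n :=
  [set x | dotp e x = 1].

From HB Require Import structures.
From mathcomp Require Import all_boot all_order all_algebra.
From mathcomp Require Import all_classical all_reals all_analysis.
From mathcomp Require Import ring lra.
Set Implicit Arguments. Unset Strict Implicit. Unset Printing Implicit Defensive.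
Import Order.TTheory GRing.Theory Num.Theory.
Import numFieldNormedType.Exports.
Local Open Scope classical_set_scope.
Local Open Scope ring_scope.

(* For [c] and [x] on the hyperplane [<e, .> = 1] and any [l], the vector
   [x - c] is the image of [w = x - l c] under the oblique projection
   [w |-> w - <e, w> c] onto [e^perp] along [c], whose operator norm is at most
   [|c| |e|]; bounding [|c|] by [r] and taking infima over [C] and [cone C]
   gives the inequality. *)

Section InnerProduct.
Variables (R : realType) (n : nat).
Implicit Types (u v w x y c e : 'rV[R]_n) (k : R).

Lemma dotpC u v : dotp u v = dotp v u.
Proof. by apply: eq_bigr => i _; rewrite mulrC. Qed.

Lemma dotpDl u v w : dotp (u + v) w = dotp u w + dotp v w.
Proof. by rewrite /dotp -big_split; apply: eq_bigr => i _; rewrite mxE mulrDl. Qed.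

Lemma dotpZl k u v : dotp (k *: u) v = k * dotp u v.
Proof. by rewrite /dotp mulr_sumr; apply: eq_bigr => i _; rewrite mxE mulrA. Qed.

Lemma dotpNl u v : dotp (- u) v = - dotp u v.
Proof. by rewrite -scaleN1r dotpZl mulN1r. Qed.

Lemma dotpBl u v w : dotp (u - v) w = dotp u w - dotp v w.
Proof. by rewrite dotpDl dotpNl. Qed.

Lemma dotpZr k u v : dotp u (k *: v) = k * dotp u v.
Proof. by rewrite dotpC dotpZl dotpC. Qed.

Lemma dotpDr u v w : dotp u (v + w) = dotp u v + dotp u w.
Proof. by rewrite dotpC dotpDl !(dotpC u). Qed.

Lemma dotpBr u v w : dotp u (v - w) = dotp u v - dotp u w.
Proof. by rewrite dotpC dotpBl !(dotpC u). Qed.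

Lemma dotp0l u : dotp 0 u = 0.
Proof. by rewrite -(scale0r 0) dotpZl mul0r. Qed.

Lemma dotpp_ge0 u : 0 <= dotp u u.
Proof. by apply: sumr_ge0 => i _; rewrite -expr2 sqr_ge0. Qed.

Lemma dotpp_eq0 u : (dotp u u == 0) = (u == 0).
Proof.
apply/eqP/eqP => [uu0|->]; last exact: dotp0l.
apply/matrixP => i j; rewrite ord1 mxE.
have sq_ge0 (k : 'I_n) : true -> 0 <= u ord0 k * u ord0 k.
  by move=> _; rewrite -expr2 sqr_ge0.
have /eqP := @psumr_eq0P _ _ _ _ sq_ge0 uu0 j isT.
by rewrite mulf_eq0 orbb => /eqP.
Qed.

Lemma dotpp_gt0 u : (0 < dotp u u) = (u != 0).
Proof. by rewrite lt_def dotpp_eq0 dotpp_ge0 andbT. Qed.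

Lemma cauchy_schwarz u v : dotp u v ^+ 2 <= dotp u u * dotp v v.
Proof.
have [->|v0] := eqVneq v 0; first by rewrite dotpC !dotp0l expr0n mulr0.
have vv_gt0 : 0 < dotp v v by rewrite dotpp_gt0.
have := dotpp_ge0 (dotp v v *: u - dotp u v *: v).
rewrite !(dotpBl, dotpBr, dotpZl, dotpZr) (dotpC v u) => h.
have : 0 <= dotp v v * (dotp u u * dotp v v - dotp u v ^+ 2) by nra.
by rewrite pmulr_rge0 // subr_ge0.
Qed.

Lemma dotp_eq1_neq0 e c : dotp e c = 1 -> c != 0.
Proof. by apply: contra_eqN => /eqP ->; rewrite dotpC dotp0l eq_sym oner_eq0. Qed.

(* Apply Cauchy-Schwarz to [w] and [<e,e> c - e], which is orthogonal to [e]. *)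
Lemma oblique_projection_sqr_le e c v : dotp e c = 1 ->
  dotp (v - dotp e v *: c) (v - dotp e v *: c) <= dotp c c * dotp e e * dotp v v.
Proof.
move=> ec; set a := dotp c c; set b := dotp e e.
have b_gt0 : 0 < b by rewrite dotpp_gt0 (@dotp_eq1_neq0 c e) // dotpC.
have ce : dotp c e = 1 by rewrite dotpC.
set t := dotp e v; set w := v - t *: c.
have ew : dotp w e = 0 by rewrite dotpC dotpBr dotpZr ec mulr1 subrr.
have vE : v = w + t *: c by rewrite subrK.
clearbody w t; rewrite {}vE.
have wd : dotp w (b *: c - e) = b * dotp w c by rewrite dotpBr dotpZr ew subr0.
have dd : dotp (b *: c - e) (b *: c - e) = b * (a * b - 1).
  by rewrite !(dotpBl, dotpBr, dotpZl, dotpZr) ec ce -/a -/b; ring.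
have wc2 : b * dotp w c ^+ 2 <= dotp w w * (a * b - 1).
  rewrite -(ler_pM2l b_gt0) mulrA -expr2 -exprMn -wd mulrCA -dd.
  exact: cauchy_schwarz.
rewrite !(dotpDl, dotpDr, dotpZl, dotpZr) (dotpC c w) -/a -subr_ge0.
set g := dotp w c; set q := dotp w w.
have -> : a * b * (q + t * g + (t * g + t * (t * a))) - q
    = (q * (a * b - 1) - b * g ^+ 2) + b * (g + a * t) ^+ 2 by ring.
by rewrite addr_ge0 ?subr_ge0 // mulr_ge0 ?sqr_ge0 // ltW.
Qed.

Lemma enorm_ge0 u : 0 <= enorm u.
Proof. exact: sqrtr_ge0. Qed.

Lemma enorm_oblique_projection_le e c v : dotp e c = 1 ->
  enorm (v - dotp e v *: c) <= enorm c * enorm e * enorm v.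
Proof.
move=> ec; rewrite /enorm -!sqrtrM ?mulr_ge0 ?dotpp_ge0 //.
by rewrite ler_sqrt ?mulr_ge0 ?dotpp_ge0 // oblique_projection_sqr_le.
Qed.

Lemma hyperplane_sub_le e c x k : hyperplane e c -> hyperplane e x ->
  enorm (x - c) <= enorm c * enorm e * enorm (x - k *: c).
Proof.
rewrite /hyperplane /= => ec ex.
have -> : x - c = (x - k *: c) - dotp e (x - k *: c) *: c.
  by rewrite dotpBr dotpZr ex ec mulr1 scalerBl scale1r opprB addrA subrK.
exact: enorm_oblique_projection_le.
Qed.

Lemma euclid_dist_le x (S : set 'rV[R]_n) y : S y -> euclid_dist x S <= enorm (x - y).
Proof.
move=> Sy; apply: ge_inf; last by exists y.
by exists 0 => _ [z _ <-]; exact: enorm_ge0.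
Qed.

Lemma le_mul_euclid_dist x (S : set 'rV[R]_n) d k : 0 < k -> S !=set0 ->
  (forall y, S y -> d <= k * enorm (x - y)) -> d <= k * euclid_dist x S.
Proof.
move=> k_gt0 [y Sy] dS; rewrite -ler_pdivrMl //; apply: lb_le_inf.
  by exists (enorm (x - y)), y.
by move=> _ [z Sz <-]; rewrite ler_pdivrMl // dS.
Qed.

End InnerProduct.

Theorem proposition4p2 (R : realType) (n : nat) (e : 'rV[R]_n)
    (C : set 'rV[R]_n) (r : R) :
  e != 0 ->
  C `<=` hyperplane e ->
  compact C ->
  convex_set_ C ->
  C !=set0 ->
  (exists2 u, C u & enorm u = r) ->
  (forall u, C u -> enorm u <= r) ->
  forall x : 'rV[R]_n, hyperplane e x -> ~ neg_set (dual_cone (cone C)) x ->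
    euclid_dist x C <= enorm e * r * euclid_dist x (cone C).
Proof.
move=> e0 CH _ _ [c0 Cc0] _ Cr x Hx _.
have r_gt0 : 0 < r.
  apply: lt_le_trans (Cr _ Cc0); rewrite sqrtr_gt0 dotpp_gt0.
  exact: dotp_eq1_neq0 (CH _ Cc0).
apply: le_mul_euclid_dist.
- by rewrite mulr_gt0 // sqrtr_gt0 dotpp_gt0.
- by exists c0, 1 => //; exists c0; rewrite ?scale1r.
move=> _ [k _ [c Cc ->]].
apply: le_trans (euclid_dist_le x Cc) _.
apply: le_trans (hyperplane_sub_le k (CH _ Cc) Hx) _.
by rewrite [enorm e * r]mulrC ler_wpM2r ?enorm_ge0 // ler_wpM2r ?enorm_ge0 ?Cr.
Qed.
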